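(* For every integer $k\ge4$ and every prime power $q\ge k^2$, $$\left(1+\frac{q}{q-1}\sum_{i=1}^{k-2}\frac{(q-1)^i}{(q-2)^{\underline{i}}}\right)^{-1}<\min_{0\le j\le k-2}\frac{q^{\underline{j+1}}}{q^{j+1}}\log_q\!\left(\frac{q-j}{k-j-1}\right).$$ That is, the upper bound $\left(1+\frac{q}{q-1}\sum_{i=1}^{k-2}\frac{(q-1)^i}{(q-2)^{\underline{i}}}\right)^{-1}$ on the asymptotic rate of linear $k$-hash codes in $\mathbb{F}_q^n$ is strictly smaller than the Körner–Marton upper bound $\min_{0\le j\le k-2}\frac{q^{\underline{j+1}}}{q^{j+1}}\log_q\frac{q-j}{k-j-1}$ on the asymptotic rate of general $q$-ary $k$-hash codes.
   Context: For positive integers $b\le a$, $a^{\underline{b}}=a(a-1)\cdots(a-b+1)$. A $q$-ary code is a $k$-hash code if for any $k$ distinct codewords there is a coordinate in which they are all pairwise distinct. *)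

From HB Require Import structures.
From mathcomp Require Import all_boot all_order all_algebra.
From mathcomp Require Import reals exp.
Set Implicit Arguments. Unset Strict Implicit. Unset Printing Implicit Defensive.
Import Order.TTheory GRing.Theory Num.Theory.
Local Open Scope ring_scope.

Definition prime_power (q : nat) : Prop :=
  exists p m : nat, prime p /\ (0 < m)%N /\ q = (p ^ m)%N.

Definition logb {R : realType} (b x : R) : R := ln x / ln b.

Definition linear_bound {R : realType} (k q : nat) : R :=
  (1 + q%:R / (q - 1)%:R *
       \sum_(1 <= i < k.-1) ((q - 1)%:R ^+ i / ((q - 2) ^_ i)%:R))^-1.

Definition km_term {R : realType} (k q j : nat) : R :=
  (q ^_ j.+1)%:R / (q%:R ^+ j.+1) *
  logb (q%:R) ((q - j)%:R / (k - j - 1)%:R).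

(* Both sides are compared with [1 / (k - 1)]. Each summand [(q-1)^i / (q-2)^_i]
   of the linear bound is at least 1 and [q / (q-1) > 1], so the linear bound is
   below [1 / (k - 1)]. For [m = j + 1 <= k - 1], Weierstrass' inequality gives
   [q^_m / q^m >= 1 - 'C(m, 2) / q >= 2 / (k - 1)] since [q >= k^2], while
   [((q - j) / (k - j - 1))^2 > q] makes the logarithm larger than [1/2]. *)

From HB Require Import structures.
From mathcomp Require Import all_boot all_order all_algebra.
From mathcomp Require Import reals exp.
From mathcomp Require Import zify lra.
Set Implicit Arguments. Unset Strict Implicit. Unset Printing Implicit Defensive.
Import Order.TTheory GRing.Theory Num.Theory.

Lemma ffact_leq_expn (n p m : nat) : n <= p -> n ^_ m <= p ^ m.
Proof.
elim: m n => [|m IHm] n le_np; first by rewrite ffactn0 expn0.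
by rewrite ffactnS expnS leq_mul // IHm // (leq_trans (leq_pred n)).
Qed.

(* Weierstrass' product inequality for [q ^_ m / q ^ m = \prod_(i < m) (1 - i / q)]. *)
Lemma expnS_leq_ffact (q m : nat) : m <= q ->
  q ^ m.+1 <= q * q ^_ m + 'C(m, 2) * q ^ m.
Proof.
elim: m => [|m IHm] le_mq; first by rewrite expn1 ffactn0 muln1 bin0n mul0n addn0.
have {IHm} := IHm (ltnW le_mq).
rewrite ffactnSr !expnS binS bin1.
move: (q ^ m) (q ^_ m) 'C(m, 2) => b a c IH.
have := leq_mul IH (leqnn (q - m)); nia.
Qed.

Lemma ffact_ratio_ge (n q m : nat) : 3 <= n -> n.+1 ^ 2 <= q -> m <= n ->
  2 * q ^ m <= n * q ^_ m.
Proof.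
move=> n_ge3 nq le_mn.
have le_mq : m <= q by nia.
have key := expnS_leq_ffact le_mq; rewrite expnS in key.
have binm : 'C(m, 2) <= 'C(n, 2) by rewrite leq_bin2l.
have binn := bin_ffact n 2; rewrite ffactnS ffactn1 /= in binn.
have q_gt0 : 0 < q by nia.
have nd : n * 'C(n, 2) <= (n - 2) * q.
  have cubic : n * (n * n.-1) <= (n - 2) * n.+1 ^ 2 * 2.
    by case: n n_ge3 {nq le_mn binm binn} => [|[|[|p]]] // _; nia.
  rewrite -(leq_pmul2r (isT : 0 < 2)) -mulnA binn (leq_trans cubic) //.
  by rewrite leq_mul2r leq_mul2l nq orbT.
rewrite -(leq_pmul2l q_gt0).
move: (q ^ m) (q ^_ m) 'C(m, 2) 'C(n, 2) key binm nd => b a c d key binm nd.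
have := leq_mul (leqnn n) key; have := leq_mul nd (leqnn b); nia.
Qed.

Lemma sqr_sub_gt (q j d : nat) : 0 < d -> (j + d) ^ 2 < q ->
  q * d ^ 2 < (q - j) ^ 2.
Proof.
move=> d_gt0 jdq.
have [r def_q] : exists r, q = j + r by exists (q - j); nia.
subst q.
rewrite addKn.
have r_gt0 : 0 < r.
  rewrite -(ltn_add2l j) addn0 (leq_trans _ jdq) // ltnS.
  by rewrite (leq_trans (leq_addr d j)) // leq_pmulr // addn_gt0 d_gt0 orbT.
have qd : (j + r) * d <= r * (j + d) by nia.
have sq : ((j + r) * d) ^ 2 <= (r * (j + d)) ^ 2 by rewrite leq_sqr.
have lt_sq : r ^ 2 * (j + d) ^ 2 < r ^ 2 * (j + r) by rewrite ltn_pmul2l ?expn_gt0 ?r_gt0.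
rewrite -(ltn_pmul2l (ltn_addl j r_gt0)).
rewrite !expnMn in sq; nia.
Qed.

Local Open Scope ring_scope.

Lemma logb_gt_half (R : realType) (b x : R) :
  1 < b -> 0 < x -> b < x ^+ 2 -> 2^-1 < logb b x.
Proof.
move=> b_gt1 x_gt0 bx.
have lnb_gt0 : 0 < ln b := ln_gt0 b_gt1.
have : ln b < ln x *+ 2 by rewrite -lnXn // ltr_ln // posrE ?exprn_gt0 // (lt_trans ltr01).
rewrite /logb ltr_pdivlMr // mulr2n; lra.
Qed.

Lemma linear_bound_lt_inv (R : realType) (k q : nat) : (3 <= k)%N -> (k <= q)%N ->
  linear_bound (R := R) k q < (k.-1%:R)^-1.
Proof.
move=> k_ge3 le_kq; rewrite /linear_bound.
set S := \sum_(1 <= i < k.-1) _.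
have S_ge : k.-2%:R <= S.
  have -> : k.-2%:R = \sum_(1 <= i < k.-1) (1 : R) by rewrite sumr_const_nat subn1.
  rewrite /S !big_nat; apply: ler_sum => i /andP[i_ge1 i_lt].
  have ffact_pos : (0 : R) < ((q - 2) ^_ i)%:R by rewrite ltr0n ffact_gt0; lia.
  by rewrite ler_pdivlMr // mul1r -natrX ler_nat ffact_leq_expn // leq_sub2l.
have q_ratio : 1 < q%:R / (q - 1)%:R :> R.
  by rewrite ltr_pdivlMr ?ltr0n ?subn_gt0 ?mul1r ?ltr_nat; lia.
have km1 : k.-1%:R = k.-2%:R + 1 :> R by rewrite natr1; congr (_%:R); lia.
have k2_gt0 : 0 < k.-2%:R :> R by rewrite ltr0n; lia.
rewrite ltf_pV2 ?posrE ?km1; nra.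
Qed.

Lemma km_term_gt_inv (R : realType) (k q j : nat) :
  (4 <= k)%N -> (k ^ 2 <= q)%N -> (j <= k - 2)%N ->
  (k.-1%:R)^-1 < km_term (R := R) k q j.
Proof.
move=> k_ge4 kq le_jk.
have q_gt1 : (1 < q)%N by nia.
have ratio : (2 * q ^ j.+1 <= k.-1 * q ^_ j.+1)%N.
  by apply: ffact_ratio_ge; rewrite ?prednK //; lia.
have sq : (q * (k - j - 1) ^ 2 < (q - j) ^ 2)%N.
  apply: sqr_sub_gt; first lia.
  have -> : (j + (k - j - 1) = k.-1)%N by lia.
  by apply: leq_trans kq; rewrite ltn_sqr; lia.
rewrite /km_term.
set N : R := k.-1%:R; set Q : R := q%:R.
set a : R := (q ^_ j.+1)%:R; set b := Q ^+ j.+1.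
set x : R := (q - j)%:R / (k - j - 1)%:R.
have N_gt0 : 0 < N by rewrite ltr0n; lia.
have b_gt0 : 0 < b by rewrite exprn_gt0 // ltr0n; lia.
have r_ge : 2 * N^-1 <= a / b.
  rewrite ler_pdivlMr // mulrAC ler_pdivrMr // [a * N]mulrC.
  by rewrite /b /N /a /Q -natrX -!natrM ler_nat.
have x_gt0 : 0 < x by rewrite divr_gt0 // ltr0n; lia.
have Qx : Q < x ^+ 2.
  have d_gt0 : (0 : R) < (k - j - 1)%:R ^+ 2 by rewrite exprn_gt0 // ltr0n; lia.
  by rewrite expr_div_n ltr_pdivlMr // -!natrX -natrM ltr_nat.
have L_gt : 2^-1 < logb Q x by apply: logb_gt_half; rewrite ?ltr1n.
set r := a / b in r_ge *; set L := logb Q x in L_gt *.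
have Ninv_gt0 : 0 < N^-1 by rewrite invr_gt0.
nra.
Qed.

Theorem theorem4 (R : realType) (k q : nat) :
  (4 <= k)%N -> (k ^ 2 <= q)%N -> prime_power q ->
  forall j : nat, (j <= k - 2)%N ->
    linear_bound (R := R) k q < km_term (R := R) k q j.
Proof.
move=> k_ge4 kq _ j le_jk.
have k_ge3 : (3 <= k)%N by apply: ltnW.
have le_kq : (k <= q)%N.
  by apply: leq_trans kq; rewrite -{1}[k]expn1 leq_pexp2l // (leq_trans _ k_ge4).
exact: lt_trans (linear_bound_lt_inv R k_ge3 le_kq) (km_term_gt_inv R k_ge4 kq le_jk).
Qed.
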